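(* Let $n\ge1$ and $\rho\in S_{n+1}$. Then $\ell_L(\rho)=\ell_L(s_1\rho)$.
   Context: $B_m$ is the group of bijections $\sigma$ of $\{\pm1,\dots,\pm m\}$ with $\sigma(-i)=-\sigma(i)$, written in window notation $[\sigma(1),\dots,\sigma(m)]$, with product $(\sigma\tau)(i)=\sigma(\tau(i))$; $S_m\subseteq B_m$ consists of elements with all $\sigma(i)>0$. The Coxeter generators of $B_m$ are $s_0=[-1,2,\dots,m]$ and $s_i=$ the transposition of $i$ and $i+1$ ($1\le i\le m-1$); $\ell_B(\sigma)$ is the length with respect to $\{s_0,\dots,s_{m-1}\}$. $\mathrm{del}_B(\sigma)=\#\{2\le j\le m:\sigma(i)>\sigma(j)\text{ for all }1\le i<j\}$, and $\ell_L(\sigma)=\ell_B(\sigma)-\mathrm{del}_B(\sigma)$. *)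

From mathcomp Require Import all_boot all_order all_algebra.
From Stdlib Require Import ClassicalEpsilon.
Set Implicit Arguments. Unset Strict Implicit. Unset Printing Implicit Defensive.
Import Order.TTheory GRing.Theory Num.Theory.
Local Open Scope ring_scope.

(* A window [σ(1),…,σ(m)] is a list of integers. *)
Definition window := seq int.

(* w is the window of an element of B_m: |σ(1)|,…,|σ(m)| is a permutation of 1..m *)
Definition inB (m : nat) (w : window) : bool :=
  (size w == m)%N && perm_eq [seq `|x|%N | x <- w] (iota 1 m).

Definition inS (m : nat) (w : window) : bool :=
  inB m w && all (fun x => 0 < x) w.

(* σ(k) for k ∈ {±1,…,±m}, using σ(-i) = -σ(i) *)
Definition sapply (w : window) (k : int) : int :=
  if 0 <= k then nth 0 w (`|k|.-1)%N else - nth 0 w (`|k|.-1)%N.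

Definition smul (s t : window) : window := [seq sapply s x | x <- t].

Definition sid (m : nat) : window := [seq (j%:Z) | j <- iota 1 m].

Definition sgen (m i : nat) : window :=
  if i == 0%N then [seq (if j == 1%N then -1 else j%:Z) | j <- iota 1 m]
  else [seq (if j == i then (i.+1)%:Z else if j == i.+1 then i%:Z else j%:Z)
        | j <- iota 1 m].

Definition word_prod (m : nat) (s : seq 'I_m) : window :=
  foldr (fun (i : 'I_m) acc => smul (sgen m i) acc) (sid m) s.

Definition has_word_len (m : nat) (w : window) : pred nat :=
  fun k => [exists t : k.-tuple 'I_m, @word_prod m (val t) == w].

(* Coxeter length ℓ_B: least k such that σ is a product of k generators
   (0 by convention if no such word exists, which never happens on B_m). *)
Definition lengthB (m : nat) (w : window) : nat :=
  match excluded_middle_informative (exists k, has_word_len m w k) with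
  | left H => ex_minn H
  | right _ => 0%N
  end.

Definition delB (m : nat) (w : window) : nat :=
  count (fun j => all (fun i => sapply w j%:Z < sapply w i%:Z) (iota 1 j.-1))
        (iota 2 m.-1).

Definition lengthL (m : nat) (w : window) : int :=
  (lengthB m w)%:Z - (delB m w)%:Z.

From mathcomp Require Import all_boot all_order all_algebra zify.
From Stdlib Require Import ClassicalEpsilon.
Set Implicit Arguments. Unset Strict Implicit. Unset Printing Implicit Defensive.

(* On S_m the Coxeter length is the number of inversions.  Left multiplication
   by s_0 only changes signs and by s_k (k > 0) swaps the values k and k+1, so
   the inversion number of |sigma(1)|, ..., |sigma(m)| moves by at most one per
   generator; conversely a positive window other than the identity has some
   value k+1 placed before k, and s_k then removes exactly one inversion.
   Now s_1 swaps the values 1 and 2.  If 1 precedes 2, this adds one inversion,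
   and it adds exactly one left-to-right minimum, namely the value 1 at the old
   place of 2, so l_B and del_B both grow by one.  The case where 2 precedes 1
   is the previous one applied to s_1 rho. *)

Definition swapn (k n : nat) : nat :=
  if n == k then k.+1 else if n == k.+1 then k else n.

Lemma swapnK k : involutive (swapn k).
Proof. by move=> n; rewrite /swapn; do ![case: eqP => /=]; lia. Qed.

Lemma swapn_inj k : injective (swapn k).
Proof. exact: can_inj (swapnK k). Qed.

Lemma ltn_swapn k x y : ~~ ((x == k) && (y == k.+1)) -> ~~ ((x == k.+1) && (y == k)) ->
  (swapn k x < swapn k y) = (x < y).
Proof. by rewrite /swapn; do ![case: eqP => /=]; lia. Qed.

Fixpoint inversions (s : seq nat) : nat :=
  if s is x :: s' then count (fun y => y < x) s' + inversions s' else 0.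

Definition precedes (T : eqType) (a b : T) (s : seq T) : bool :=
  index a s < index b s < size s.

Lemma precedes_mem (T : eqType) (a b : T) s : precedes a b s -> (a \in s) && (b \in s).
Proof. by rewrite /precedes -!index_mem => /andP[ab bs]; rewrite bs (ltn_trans ab). Qed.

Lemma precedes_asym (T : eqType) (a b : T) s : precedes a b s -> precedes b a s = false.
Proof. by case/andP=> ab _; rewrite /precedes ltnNge ltnW. Qed.

Lemma precedes_total (T : eqType) (a b : T) s : a \in s -> b \in s -> a != b ->
  precedes a b s || precedes b a s.
Proof.
move=> aS bS ab; rewrite /precedes !index_mem aS bS !andbT.
case: ltngtP => // ab_index; case/eqP: ab.
by rewrite -(nth_index a aS) ab_index nth_index.
Qed.

Lemma precedes_cons (T : eqType) (a b x : T) s : a != b -> x \notin s ->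
  precedes a b (x :: s) = (x == a) && (b \in s) || precedes a b s.
Proof.
move=> ab xs; rewrite /precedes /= -index_mem ltnS.
case: (x =P a) => [xa|_]; case: (x =P b) => [xb|_] //=.
- by rewrite -xa -xb eqxx in ab.
- by rewrite -xa (memNindex xs); lia.
- by rewrite -xb (memNindex xs) ltnn andbF.
Qed.

Lemma precedes_map (T U : eqType) (f : T -> U) a b s : injective f ->
  precedes (f a) (f b) (map f s) = precedes a b s.
Proof. by move=> f_inj; rewrite /precedes !index_map // size_map. Qed.

Lemma nth_eq_index (T : eqType) (x0 x : T) s i : uniq s -> x \in s -> x != x0 ->
  (nth x0 s i == x) = (i == index x s).
Proof.
move=> s_uniq xs xx0; apply/eqP/eqP => [xi|->]; last exact: nth_index.
case: (ltnP i (size s)) => iS; first by rewrite -xi index_uniq.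
by rewrite nth_default // in xi; rewrite xi eqxx in xx0.
Qed.

Lemma count_swapn_lt k x s : x \notin s ->
  count (fun y => y < swapn k x) (map (swapn k) s) + (x == k.+1) * count_mem k s
  = count (fun y => y < x) s + (x == k) * count_mem k.+1 s.
Proof.
rewrite count_map.
elim: s => [|y s IH] /=; first by rewrite !muln0.
rewrite inE negb_or => /andP[xy /IH].
by move: xy; rewrite /swapn; do ![case: eqP => /=]; lia.
Qed.

(* Only the relative order of the values k and k.+1 changes. *)
Lemma inversions_swapn k s : uniq s ->
  inversions (map (swapn k) s) + precedes k.+1 k s = inversions s + precedes k k.+1 s.
Proof.
elim: s => //= x s IH /andP[xs us]; have {}IH := IH us.
have := count_swapn_lt k xs; rewrite !count_uniq_mem //.
have notP a b : x \in [:: a; b] -> precedes a b s = false.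
  move=> xab; apply/negbTE; apply: contra xs => /precedes_mem/andP[aS bS].
  by move: xab; rewrite !inE => /orP[]/eqP->.
rewrite !precedes_cons // ?(ltn_eqF (ltnSn k)) ?(gtn_eqF (ltnSn k)) //.
case: (x =P k) => [xk|_]; last case: (x =P k.+1) => [xk|_] /=; last by lia.
all: rewrite !notP ?xk ?inE ?eqxx ?orbT // in IH *; lia.
Qed.

Lemma perm_iota_uniq m s : perm_eq s (iota 1 m) -> uniq s.
Proof. by move/perm_uniq->; apply: iota_uniq. Qed.

Lemma inversions_eq0 s : (inversions s == 0) = sorted leq s.
Proof.
elim: s => //= x s IH; rewrite addn_eq0 IH (path_sortedE leq_trans) eqn0Ngt -has_count.
by rewrite -all_predC; congr (_ && _); apply: eq_all => y /=; rewrite -leqNgt.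
Qed.

Lemma exists_precedes_succ (s : seq nat) v u : v <= u ->
  (forall i, v <= i <= u -> i \in s) -> index u s < index v s ->
  exists2 k, v <= k < u & precedes k.+1 k s.
Proof.
move=> vu vus uv.
suff /hasP[k] : has (fun k => precedes k.+1 k s) (iota v (u - v)).
  by rewrite mem_iota subnKC // => k_vu pk; exists k.
apply/negPn/negP => /hasPn noP.
pose D : {pred nat} := [pred i | v <= i <= u].
have D_conv : {in D &, forall i j k, i < k < j -> k \in D}.
  by move=> i j; rewrite /D !inE => iD jD k ikj; rewrite inE; lia.
have index_incr : {in D, forall i, i.+1 \in D -> index i s <= index i.+1 s}.
  move=> i; rewrite /D !inE => iD iD1; have := noP i; rewrite mem_iota /precedes.
  by have := vus i iD; rewrite -index_mem; lia.
have vD : v \in D by rewrite inE leqnn vu.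
have uD : u \in D by rewrite inE leqnn vu.
by have := homo_leq_in leqnn leq_trans D_conv index_incr vD uD vu; lia.
Qed.

Lemma descent_of_unsorted m s : perm_eq s (iota 1 m) -> ~~ sorted leq s ->
  exists2 k, 0 < k < m & precedes k.+1 k s.
Proof.
move=> sP s_unsorted; have s_uniq := perm_iota_uniq sP.
have s_range a : a < size s -> 0 < nth 0 s a <= m.
  by move=> aS; have := mem_nth 0 aS; rewrite (perm_mem sP) mem_iota add1n ltnS.
have /hasP[a] : has (fun a => nth 0 s a.+1 < nth 0 s a) (iota 0 (size s).-1).
  apply: contraR s_unsorted => /hasPn noDesc; apply/(sortedP 0) => a aS.
  by rewrite leqNgt; apply: noDesc; rewrite mem_iota add0n ltn_predRL.
rewrite mem_iota ltn_predRL => /andP[_ aS] desc.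
have [i i_range||k k_range pk] := exists_precedes_succ (s := s) (ltnW desc).
- rewrite (perm_mem sP) mem_iota; have := s_range a; have := s_range a.+1; lia.
- by rewrite !index_uniq //; lia.
by exists k => //; have := s_range a; have := s_range a.+1; lia.
Qed.

Lemma nth_sgen m i j : 0 < j <= m ->
  nth 0%R (sgen m i) j.-1 =
    if i == 0 then (if j == 1 then (-1)%R else Posz j) else Posz (swapn i j).
Proof.
move=> /andP[j_gt0 j_le]; have jS : j.-1 < size (iota 1 m) by rewrite size_iota; lia.
rewrite /sgen /swapn; case: ifP => _; rewrite (nth_map 0) // nth_iota ?add1n ?prednK //.
by do ?case: ifP.
Qed.

Lemma absz_sapply w x : `|sapply w x| = `|nth 0%R w `|x|.-1|.
Proof. by rewrite /sapply; case: ifP; rewrite ?abszN. Qed.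

Lemma absz_sapply_sgen m i x : 0 < `|x| <= m ->
  `|sapply (sgen m i) x| = if i == 0 then `|x| else swapn i `|x|.
Proof.
by move=> x_range; rewrite absz_sapply nth_sgen //; case: eqP => // _; case: eqP => [->|].
Qed.

Lemma sapply_sgen_Posz m k j : 0 < k -> 0 < j <= m ->
  sapply (sgen m k) (Posz j) = Posz (swapn k j).
Proof. by move=> k_gt0 j_range; rewrite /sapply /= nth_sgen // gtn_eqF. Qed.

Lemma smul_sgen_Posz m k s : 0 < k -> {subset s <= iota 1 m} ->
  smul (sgen m k) (map Posz s) = map Posz (map (swapn k) s).
Proof.
move=> k_gt0 s_range; rewrite /smul -!map_comp; apply/eq_in_map => j /s_range.
by rewrite mem_iota /= => j_range; apply: sapply_sgen_Posz => //; lia.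
Qed.

Lemma perm_swapn_iota m k s : 0 < k < m -> perm_eq s (iota 1 m) ->
  perm_eq (map (swapn k) s) (iota 1 m).
Proof.
move=> k_range sP; apply: perm_trans (perm_map _ sP) _.
apply: uniq_perm; rewrite ?(map_inj_uniq (@swapn_inj k)) ?iota_uniq // => x.
rewrite -{1}(swapnK k x) (mem_map (@swapn_inj k)) !mem_iota /swapn.
by do ![case: eqP]; lia.
Qed.

Lemma inB_absz m w x : inB m w -> x \in w -> 0 < `|x| <= m.
Proof.
by case/andP=> _ wP /(map_f absz); rewrite (perm_mem wP) mem_iota add1n ltnS.
Qed.

Lemma absz_smul_sgen m i w : inB m w ->
  map absz (smul (sgen m i) w) = if i == 0 then map absz w else map (swapn i) (map absz w).
Proof.
move=> wB; rewrite /smul -map_comp.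
case: ifP => i0; rewrite -?map_comp; apply/eq_in_map => x xw.
all: by rewrite /= absz_sapply_sgen ?i0 //; apply: inB_absz xw.
Qed.

Lemma inB_smul_sgen m i w : i < m -> inB m w -> inB m (smul (sgen m i) w).
Proof.
move=> im /[dup] wB /andP[w_size wP]; rewrite /inB size_map w_size absz_smul_sgen //.
by case: ifP => // i0; apply: perm_swapn_iota => //; rewrite lt0n i0.
Qed.

Lemma map_absz_Posz s : map absz (map Posz s) = s.
Proof. by elim: s => //= x s ->. Qed.

Lemma inB_word_prod m (t : seq 'I_m) : inB m (word_prod t).
Proof.
elim: t => [|i t IH]; last exact: inB_smul_sgen (ltn_ord i) IH.
by rewrite /inB /sid size_map size_iota map_absz_Posz eqxx perm_refl.
Qed.

Lemma inversions_word_prod m (t : seq 'I_m) : inversions (map absz (word_prod t)) <= size t.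
Proof.
elim: t => [|i t IH] /=.
  by rewrite leqn0 /sid map_absz_Posz inversions_eq0 iota_sorted.
have tB := inB_word_prod t; have /andP[_ tP] := tB.
have t_uniq : uniq (map absz (word_prod t)) := perm_iota_uniq tP.
rewrite absz_smul_sgen //; case: ifP => _; first exact: leqW.
by have := inversions_swapn i t_uniq; lia.
Qed.

Lemma has_word_len_Posz m s : perm_eq s (iota 1 m) ->
  has_word_len m (map Posz s) (inversions s).
Proof.
move=> sP; move s_inv : (inversions s) => n; elim: n s s_inv sP => [|n IH] s s_inv sP.
  have s_sorted : sorted leq s by rewrite -inversions_eq0 s_inv.
  have -> : s = iota 1 m := sorted_eq leq_trans anti_leq s_sorted (iota_sorted 1 m) sP.
  by apply/existsP; exists [tuple].
have [|k k_range pk] := descent_of_unsorted sP; first by rewrite -inversions_eq0 s_inv.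
have s'P := perm_swapn_iota k_range sP.
have s'_inv : inversions (map (swapn k) s) = n.
  by have := inversions_swapn k (perm_iota_uniq sP); rewrite pk precedes_asym //; lia.
have /existsP[t /eqP tP] := IH _ s'_inv s'P.
have /andP[k_gt0 km] := k_range.
apply/existsP; exists [tuple of Ordinal km :: t]; apply/eqP.
by rewrite /= tP smul_sgen_Posz ?(mapK (swapnK k)) // => x; rewrite (perm_mem s'P).
Qed.

Lemma lengthB_Posz m s : perm_eq s (iota 1 m) -> lengthB m (map Posz s) = inversions s.
Proof.
move=> sP; have s_word := has_word_len_Posz sP.
rewrite /lengthB; case: excluded_middle_informative => [ex | []]; last by exists (inversions s).
case: ex_minnP => k /existsP[t /eqP tP] k_min; apply/anti_leq; rewrite k_min //=.
by have := inversions_word_prod t; rewrite tP map_absz_Posz size_tuple.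
Qed.

Definition lr_minimum (s : seq nat) (j : nat) : bool :=
  all (fun i => nth 0 s j.-1 < nth 0 s i.-1) (iota 1 j.-1).

Lemma delB_Posz m s : delB m (map Posz s) = count (lr_minimum s) (iota 2 m.-1).
Proof.
have nth_Posz n : nth 0%R (map Posz s) n = Posz (nth 0 s n).
  by case: (ltnP n (size s)) => nS; [rewrite (nth_map 0) | rewrite !nth_default ?size_map].
by apply: eq_count => j; apply: eq_all => i; rewrite /sapply /= !nth_Posz ltz_nat.
Qed.

Lemma lr_minimum_swap12 (s : seq nat) j :
  uniq s -> 0 \notin s -> 2 \in s -> index 1 s < index 2 s -> 0 < j <= size s ->
  lr_minimum (map (swapn 1) s) j = lr_minimum s j || (j == (index 2 s).+1).
Proof.
move=> s_uniq s0 s2 p12 j_range.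
have s1 : 1 \in s by rewrite -index_mem (ltn_trans p12) ?index_mem.
have qS : index 2 s < size s by rewrite index_mem.
have nth1 i : (nth 0 s i == 1) = (i == index 1 s) by apply: nth_eq_index.
have nth2 i : (nth 0 s i == 2) = (i == index 2 s) by apply: nth_eq_index.
have nth_swap i : i < size s -> nth 0 (map (swapn 1) s) i = swapn 1 (nth 0 s i).
  exact: nth_map.
rewrite /lr_minimum; case: (j =P (index 2 s).+1) => [->|jq]; rewrite ?orbT ?orbF /=.
- apply/allP => i; rewrite mem_iota => i_range.
  have iS : i.-1 < size s by apply: leq_ltn_trans qS; lia.
  have : nth 0 s i.-1 != 2 by rewrite nth2; lia.
  have : nth 0 s i.-1 != 0 by apply: contraNneq s0 => <-; apply: mem_nth.
  by rewrite !nth_swap // nth_index // /swapn; do ![case: eqP]; lia.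
- apply: eq_in_all => i; rewrite mem_iota => i_range.
  by rewrite !nth_swap ?ltn_swapn ?nth1 ?nth2 //; lia.
Qed.

Lemma count_lr_minimum_swap12 m s : perm_eq s (iota 1 m) -> precedes 1 2 s ->
  count (lr_minimum (map (swapn 1) s)) (iota 2 m.-1) =
    (count (lr_minimum s) (iota 2 m.-1)).+1.
Proof.
move=> sP /[dup] /precedes_mem/andP[s1 s2] /andP[p12 _].
have s_uniq := perm_iota_uniq sP.
have s0 : 0 \notin s by rewrite (perm_mem sP) mem_iota.
have qm : index 2 s < m by rewrite -[m](size_iota 1) -(perm_size sP) index_mem.
have not_lr_q : lr_minimum s (index 2 s).+1 = false.
  apply/allP => /(_ (index 1 s).+1); rewrite mem_iota /= !nth_index //.
  by rewrite add1n ltnS => /(_ p12).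
have -> : count (lr_minimum (map (swapn 1) s)) (iota 2 m.-1) =
          count (predU (lr_minimum s) (pred1 (index 2 s).+1)) (iota 2 m.-1).
  apply: eq_in_count => j; rewrite mem_iota => j_range; rewrite /= lr_minimum_swap12 //.
  by rewrite (perm_size sP) size_iota; lia.
have := count_predUI (lr_minimum s) (pred1 (index 2 s).+1) (iota 2 m.-1).
have -> : count (predI (lr_minimum s) (pred1 (index 2 s).+1)) (iota 2 m.-1) = 0.
  apply/eqP; rewrite eqn0Ngt -has_count; apply/hasPn => j _ /=.
  by case: eqP => [->|]; rewrite ?not_lr_q ?andbF.
by rewrite count_uniq_mem ?iota_uniq // mem_iota; lia.
Qed.

Lemma inS_Posz m w : inS m w -> exists2 s, perm_eq s (iota 1 m) & w = map Posz s.
Proof.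
case/andP=> /andP[_ wP] w_pos; exists (map absz w) => //.
by elim: w w_pos {wP} => //= x w IH /andP[x_pos /IH{1}->]; case: x x_pos.
Qed.

Lemma lengthL_swap12 m s : perm_eq s (iota 1 m) -> precedes 1 2 s ->
  lengthL m (map Posz (map (swapn 1) s)) = lengthL m (map Posz s).
Proof.
move=> sP p12; have /andP[_ s2] := precedes_mem p12.
have m_gt1 : 1 < m by move: s2; rewrite (perm_mem sP) mem_iota; lia.
rewrite /lengthL !lengthB_Posz ?perm_swapn_iota // !delB_Posz count_lr_minimum_swap12 //.
by have := inversions_swapn 1 (perm_iota_uniq sP); rewrite p12 precedes_asym //; lia.
Qed.

Theorem lemma3p4 (n : nat) (rho : window) :
  (1 <= n)%N -> inS n.+1 rho ->
  lengthL n.+1 rho = lengthL n.+1 (smul (sgen n.+1 1) rho).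
Proof.
move=> n_gt0 /inS_Posz[s sP ->].
rewrite smul_sgen_Posz //; last by move=> x; rewrite (perm_mem sP).
have [s1 s2] : 1 \in s /\ 2 \in s by rewrite !(perm_mem sP) !mem_iota; lia.
case/orP: (precedes_total s1 s2 isT) => [p12|p21]; first by rewrite lengthL_swap12.
have s'P : perm_eq (map (swapn 1) s) (iota 1 n.+1) by apply: perm_swapn_iota.
rewrite -[in LHS](mapK (swapnK 1) s) lengthL_swap12 //.
by rewrite (precedes_map (f := swapn 1) 2 1 s) //; exact: swapn_inj.
Qed.
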